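(* Let $u_0\in H^1(\mathbb S)$ with $h=\int_{\mathbb S}u_{0x}^2\neq1$, and let $u$ be a global admissible conservative weak solution with initial datum $u_0$ (defined below). For each $t\ge0$ and $\beta\in\mathbb R$, define $y(t,\beta)$ implicitly by $$y(t,\beta)+\int_0^{y(t,\beta)}u_x^2(t,z)\,dz=(1+h)\beta.$$ Then, for every $t\ge0$, the maps $\beta\mapsto y(t,\beta)$ and $\beta\mapsto u(t,y(t,\beta))$ are Lipschitz continuous with constant $1+h$.
   Context: $\mathbb S=\mathbb R/\mathbb Z$. For $w$ on $\mathbb S$ write - $\overline w=\int_{\mathbb S}w$; - $\mathbb Pw=w-\overline w$; - $\partial_x^{-1}w(x)=\int_0^x\mathbb Pw$. Test functions $\psi\in C_0^\infty(\mathbb R^+;\mathcal D(\mathbb S))$ are smooth, 1-periodic in $x$, and compactly supported in $t\in[0,\infty)$. Also $$f(t)=\frac{1}{1-h}\int_{\mathbb S}(1-u_x^2)\,\partial_x^{-1}(u-uu_x^2)\,dy.$$ A function $u\in L^\infty(\mathbb R^+;H^1(\mathbb S))$ is a global admissible conservative weak solution if all of the following hold for all test functions $\psi$. (i) $$\iint(u\psi_{tx}+u^2u_x\psi_x)=\iint\big(u-uu_x^2-\overline{u-uu_x^2}\big)\psi+\int_{\mathbb S}u_{0x}\psi(0,\cdot).$$ (ii) $$\iint(u\psi_t-\tfrac13u^3\psi_x)=-\iint\big(\partial_x^{-1}(u-uu_x^2)-f(t)\big)\psi-\int_{\mathbb S}u_0\psi(0,\cdot).$$ (iii) $\int_{\mathbb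 S}u_x^2$ and $\int_{\mathbb S}(u-uu_x^2)$ are constant in time. (iv) $$\iint(u_x^2\psi_t-u^2u_x^2\psi_x)=-\iint\big((u^2)_x-2u_x\overline{u-uu_x^2}\big)\psi-\int_{\mathbb S}u_{0x}^2\psi(0,\cdot).$$ Here all double integrals are over $\mathbb R^+\times\mathbb S$. *)

From HB Require Import structures.
From mathcomp Require Import all_boot all_order all_algebra.
From mathcomp Require Import all_classical all_reals all_analysis.
Set Implicit Arguments. Unset Strict Implicit. Unset Printing Implicit Defensive.
Import Order.TTheory GRing.Theory Num.Theory.
Import numFieldNormedType.Exports.
Local Open Scope classical_set_scope.
Local Open Scope ring_scope.

Section Defs.
Variable R : realType.
Local Notation mu := (@lebesgue_measure R).

(* integral over the circle S = R/Z, i.e. over one period [0,1] *)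
Definition intCirc (w : R -> R) : R := \int[mu]_(x in `[0, 1]) w x.

Definition meanS (w : R -> R) : R := intCirc w.

Definition projP (w : R -> R) : R -> R := fun x => w x - meanS w.

Definition oint (a b : R) (f : R -> R) : R :=
  if a <= b then \int[mu]_(x in `[a, b]) f x
  else - \int[mu]_(x in `[b, a]) f x.

Definition invdx (w : R -> R) : R -> R := fun x => oint 0 x (projP w).

Definition dint (F : R -> R -> R) : R :=
  \int[mu]_(t in `[0, +oo[) (\int[mu]_(x in `[0, 1]) F t x).

Definition periodic1 (w : R -> R) : Prop := forall x, w (x + 1) = w x.

(* w is in H^1(S) with weak derivative wx: w, wx are 1-periodic,
   wx is measurable and square integrable on a period, and w is the
   (absolutely continuous) primitive of wx. *)
Definition H1S (w wx : R -> R) : Prop :=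
  [/\ periodic1 w, periodic1 wx,
      measurable_fun setT wx,
      mu.-integrable `[0, 1] (fun x => ((wx x) ^+ 2)%:E)
    & forall x, w x = w 0 + oint 0 x wx].

Definition pdt (f : R -> R -> R) : R -> R -> R :=
  fun t x => derive1 (fun s => f s x) t.
Definition pdx (f : R -> R -> R) : R -> R -> R :=
  fun t x => derive1 (fun s => f t s) x.

Fixpoint Cn (n : nat) (f : R -> R -> R) : Prop :=
  match n with
  | 0 => continuous (fun p : R * R => f p.1 p.2)
  | n'.+1 => [/\ continuous (fun p : R * R => f p.1 p.2),
                 (forall t x, derivable (fun s => f s x) t 1),
                 (forall t x, derivable (fun s => f t s) x 1),
                 Cn n' (pdt f) & Cn n' (pdx f)]
  end.

Definition smooth2 (f : R -> R -> R) : Prop := forall n, Cn n f.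

Definition test_fun (psi : R -> R -> R) : Prop :=
  [/\ smooth2 psi,
      (forall t, periodic1 (psi t))
    & exists T : R, forall t x, T <= t -> psi t x = 0].

Definition mbar (u ux : R -> R -> R) (t : R) : R :=
  meanS (fun x => u t x - u t x * (ux t x) ^+ 2).

Definition fcoef (h : R) (u ux : R -> R -> R) (t : R) : R :=
  (1 - h)^-1 * intCirc (fun y => (1 - (ux t y) ^+ 2) *
                     invdx (fun z => u t z - u t z * (ux t z) ^+ 2) y).

Definition weak_solution (u0 u0x : R -> R) (u ux : R -> R -> R) : Prop :=
  let h := intCirc (fun x => (u0x x) ^+ 2) in
  (
   (* u in L^oo(R^+; H^1(S)) *)
   (forall t, 0 <= t -> H1S (u t) (ux t)) /\
   (exists M : R, forall t, 0 <= t ->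
       intCirc (fun x => (u t x) ^+ 2) + intCirc (fun x => (ux t x) ^+ 2) <= M) /\
   measurable_fun setT (fun p : R * R => u p.1 p.2) /\
   measurable_fun setT (fun p : R * R => ux p.1 p.2) /\
   (forall psi, test_fun psi ->
      dint (fun t x => u t x * pdx (pdt psi) t x
                       + (u t x) ^+ 2 * ux t x * pdx psi t x)
      = dint (fun t x => (u t x - u t x * (ux t x) ^+ 2 - mbar u ux t) * psi t x)
        + intCirc (fun x => u0x x * psi 0 x)) /\
   (forall psi, test_fun psi ->
      dint (fun t x => u t x * pdt psi t x
                       - 3^-1 * (u t x) ^+ 3 * pdx psi t x)
      = - dint (fun t x =>
                  (invdx (fun z => u t z - u t z * (ux t z) ^+ 2) x
                   - fcoef h u ux t) * psi t x)
        - intCirc (fun x => u0 x * psi 0 x)) /\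
   (forall t s, 0 <= t -> 0 <= s ->
      intCirc (fun x => (ux t x) ^+ 2) = intCirc (fun x => (ux s x) ^+ 2)
      /\ intCirc (fun x => u t x - u t x * (ux t x) ^+ 2)
         = intCirc (fun x => u s x - u s x * (ux s x) ^+ 2)) /\
   (* (iv)  ((u^2)_x written as 2 u u_x) *)
   (forall psi, test_fun psi ->
      dint (fun t x => (ux t x) ^+ 2 * pdt psi t x
                       - (u t x) ^+ 2 * (ux t x) ^+ 2 * pdx psi t x)
      = - dint (fun t x => (2 * u t x * ux t x - 2 * ux t x * mbar u ux t)
                           * psi t x)
        - intCirc (fun x => (u0x x) ^+ 2 * psi 0 x))).

End Defs.

From HB Require Import structures.
From mathcomp Require Import all_boot all_order all_algebra.
From mathcomp Require Import all_classical all_reals all_analysis.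
From mathcomp Require Import measurable_realfun lra.
Import Order.TTheory GRing.Theory Num.Theory.
Import numFieldNormedType.Exports.
Local Open Scope ring_scope.

(* If y(t, b2) <= y(t, b1), subtracting the two defining relations gives
     (y(t, b1) - y(t, b2)) + \int_{y(t, b2)}^{y(t, b1)} u_x(t)^2 = (1 + h) (b1 - b2),
   and the left-hand side dominates both y(t, b1) - y(t, b2) and, since
   |u_x| <= 1 + u_x^2, also \int |u_x(t)| >= |u(t, y(t, b1)) - u(t, y(t, b2))|.
   Only the H^1 structure of u(t) is used: u_x(t)^2 is periodic and integrable
   over a period, hence over every bounded interval. *)

Section lebesgue_shift.
Local Open Scope classical_set_scope.
Context {R : realType}.
Local Notation mu := (@lebesgue_measure R).

Let measurable_addr (c : R) :
  measurable_fun setT ((fun x => x + c) : measurableTypeR R -> measurableTypeR R).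
Proof. exact: measurable_funD. Qed.

Lemma lebesgue_measureD (c : R) (A : set R) : measurable A ->
  pushforward mu ((fun x => x + c) : _ -> measurableTypeR R) A = mu A.
Proof.
move=> mA; apply/esym/lebesgue_measure_unique => //= _ [[a b]] _ <-.
rewrite /pushforward.
have -> : (fun x => x + c) @^-1` `]a, b]%classic = `](a - c), (b - c)]%classic.
  by apply/seteqP; split => x /=; rewrite !in_itv /= ltrBlDr lerBrDr.
rewrite !lebesgue_measure_itv /= !lte_fin ltrD2r.
by case: ifP => // _; rewrite -!EFinD opprB addrA subrK.
Qed.

Lemma ge0_integral_shift (c : R) (A : set R) (f : R -> \bar R) :
  measurable A -> measurable_fun setT f -> (forall x, (0 <= f x)%E) ->
  (\int[mu]_(x in A) f x = \int[mu]_(x in (fun x => x + c)%R @^-1` A) f (x + c)%R)%E.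
Proof.
move=> mA mf f0.
(* the measure structure of a pushforward depends on a measurability proof,
   hence cannot be inferred *)
pose shifted := measure_function_pushforward__canonical__measure_function_Measure
  mu (measurable_addr c).
transitivity (\int[shifted]_(x in A) f x)%E.
  by apply: eq_measure_integral => B mB _; rewrite /= lebesgue_measureD.
by apply: (ge0_integral_pushforward (measurable_addr c)) => //; exact: measurable_funS mf.
Qed.

End lebesgue_shift.

Section periodic_integral.
Local Open Scope classical_set_scope.
Context {R : realType}.
Local Notation mu := (@lebesgue_measure R).

Lemma periodic1_addz (w : R -> R) : periodic1 w -> forall x (m : int), w (x + m%:~R) = w x.
Proof.
move=> pw.
have addn_period (n : nat) x : w (x + n%:R) = w x.
  by elim: n x => [|n IHn] x; rewrite ?addr0 // -natr1 addrA pw IHn.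
move=> x [n|n]; first exact: addn_period.
by rewrite -(addn_period n.+1) NegzE mulrNz subrK.
Qed.

Section ge0_periodic.
Variable g : R -> R.
Hypotheses (pg : periodic1 g) (mg : measurable_fun setT g) (g0 : forall x, 0 <= g x).

Let mgE (D : set R) : measurable_fun D (EFin \o g).
Proof. by apply/measurable_EFinP; exact: measurable_funS mg. Qed.

Let g0E x : (0 <= (g x)%:E)%E.
Proof. by rewrite lee_fin. Qed.

Lemma ge0_integral_period (m : int) :
  (\int[mu]_(x in `[(m%:~R : R), (m%:~R + 1)%R]) (g x)%:E
   = \int[mu]_(x in `[0%R, 1%R]) (g x)%:E)%E.
Proof.
rewrite (ge0_integral_shift m%:~R) //.
rewrite (_ : _ @^-1` _ = `[0, 1]); last first.
  by apply/seteqP; split => x /=; rewrite !in_itv /= lerDr [_ + 1]addrC lerD2r.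
by apply: eq_integral => x _; rewrite periodic1_addz.
Qed.

Lemma ge0_integral_periods (n : int) (k : nat) :
  (\int[mu]_(x in `[(n%:~R : R), (n%:~R + k%:R)%R]) (g x)%:E
   = (\int[mu]_(x in `[0%R, 1%R]) (g x)%:E) *+ k)%E.
Proof.
elim: k => [|k IHk]; first by rewrite addr0 set_itv1 integral_set1.
have -> : `[n%:~R, n%:~R + k.+1%:R] =
    `[n%:~R, n%:~R + k%:R] `|` `](n%:~R + k%:R), n%:~R + k%:R + 1] :> set R.
  by rewrite -natr1 addrA; apply: itv_bndbnd_setU; rewrite bnd_simp lerDl.
rewrite ge0_integral_setU //; first last.
- apply/disj_setPS => x [] /=; rewrite !in_itv /= => /andP[_ xk] /andP[kx _].
  by move: (lt_le_trans kx xk); rewrite ltxx.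
- exact: mgE.
rewrite integral_itv_obnd_cbnd; last exact: mgE.
rewrite IHk -[k%:R]/(k%:~R : R) -intrD ge0_integral_period.
exact/esym/mulrSr.
Qed.

End ge0_periodic.

Lemma periodic1_integrable_itv (g : R -> R) :
  periodic1 g -> measurable_fun setT g -> mu.-integrable `[0, 1] (EFin \o g) ->
  forall a b, mu.-integrable `[a, b] (EFin \o g).
Proof.
move=> pg mg /integrableP[_ g01] a b.
set N := (Num.truncn (`|a| + `|b|)).+1.
have abN : `[a, b] `<=` `[(- N%:Z)%:~R, (- N%:Z)%:~R + (N + N)%N%:R].
  have := truncnS_gt (`|a| + `|b|); rewrite -/N => Nab.
  have aN := ler_norm (- a); rewrite normrN in aN.
  have bN := ler_norm b; have a0 := normr_ge0 a; have b0 := normr_ge0 b.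
  move=> x /=; rewrite !in_itv /= natrD mulrNz pmulrn => /andP[ax xb].
  by apply/andP; split; lra.
apply: (@integrableS _ _ _ mu _ _ _ _ _ abN) => //.
apply/integrableP; split.
  by apply/measurable_EFinP; exact: measurable_funS mg.
have pgn : periodic1 (fun x => `|g x|) by move=> x; rewrite pg.
have mgn : measurable_fun setT (fun x => `|g x|) by exact: measurableT_comp.
under eq_integral do rewrite abse_EFin.
rewrite ge0_integral_periods //.
by rewrite -mule_natr muleC lte_mul_pinfty.
Qed.

End periodic_integral.

Section oriented_integral.
Context {R : realType}.
Local Notation mu := (@lebesgue_measure R).

Lemma Rintegral_itv_split {f : R -> R} {x y z : R} :
  (forall a b, mu.-integrable `[a, b] (EFin \o f)) -> x <= y -> y <= z ->
  \int[mu]_(t in `[x, z]) f t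
  = \int[mu]_(t in `[x, y]) f t + \int[mu]_(t in `[y, z]) f t.
Proof.
move=> f_int xy yz.
have := Rintegral_itvB (a := BLeft x) (b := BRight z) (x := y) (f_int x z).
rewrite !bnd_simp => /(_ xy yz); rewrite Rintegral_itv_obnd_cbnd.
  by move=> <-; rewrite addrC subrK.
by apply: integrableS (f_int y z) => //; apply: subset_itvr; rewrite bnd_simp.
Qed.

Lemma ointB {f : R -> R} (c : R) {a b : R} :
  (forall a b, mu.-integrable `[a, b] (EFin \o f)) -> a <= b ->
  oint c b f - oint c a f = \int[mu]_(x in `[a, b]) f x.
Proof.
move=> f_int ab; rewrite /oint.
have [ca|ac] := leP c a.
  by rewrite (le_trans ca ab) (Rintegral_itv_split f_int ca ab) addrC addKr.
have [cb|bc] := leP c b.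
  by rewrite opprK (Rintegral_itv_split f_int (ltW ac) cb) addrC.
by rewrite (Rintegral_itv_split f_int ab (ltW bc)) opprK addrC addrK.
Qed.

End oriented_integral.

Lemma normr_le1Dsqr {R : realDomainType} (v : R) : `|v| <= 1 + v ^+ 2.
Proof.
rewrite -real_normK ?num_real //.
have [v1|/ltW v1] := lerP `|v| 1; first by rewrite ler_wpDr ?sqr_ge0.
by rewrite ler_wpDl // expr2 ler_peMl.
Qed.

Lemma lipschitz_of_ordered_increments {R : realDomainType} (Y G : R -> R) (c : R) :
  (forall b1 b2, Y b2 <= Y b1 -> `|G b1 - G b2| <= c * (b1 - b2)) ->
  forall b1 b2, `|G b1 - G b2| <= `|c| * `|b1 - b2|.
Proof.
move=> inc b1 b2; wlog Y21 : b1 b2 / Y b2 <= Y b1.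
  move=> ordered; have [/ordered //|/ltW/ordered] := leP (Y b2) (Y b1).
  by rewrite distrC [`|b2 - b1|]distrC.
by rewrite -normrM (le_trans (inc _ _ Y21)) // ler_norm.
Qed.

Section implicit_lipschitz.
Context {R : realType}.
Local Notation mu := (@lebesgue_measure R).
Variables (v F Y : R -> R) (c : R).
Hypotheses (mv : measurable_fun setT v)
  (v2_int : forall a b, mu.-integrable `[a, b] (EFin \o (fun x => v x ^+ 2)))
  (F_prim : forall x, F x = F 0 + oint 0 x v)
  (Y_def : forall b, Y b + oint 0 (Y b) (fun x => v x ^+ 2) = c * b).

Let one_int a b : mu.-integrable `[a, b] (EFin \o cst (1 : R)).
Proof.
apply: continuous_compact_integrable; first exact: segment_compact.
by move=> x; exact: cvg_cst.
Qed.

Let v_int a b : mu.-integrable `[a, b] (EFin \o v).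
Proof.
apply: le_integrable (integrableD _ (one_int a b) (v2_int a b)) => //.
  by apply/measurable_EFinP; exact: measurable_funS mv.
move=> x _ /=; rewrite lee_fin [`|1 + _|]ger0_norm ?normr_le1Dsqr //.
by rewrite addr_ge0 ?sqr_ge0.
Qed.

Lemma implicit_increment b1 b2 : Y b2 <= Y b1 ->
  Y b1 - Y b2 + \int[mu]_(x in `[Y b2, Y b1]) v x ^+ 2 = c * (b1 - b2).
Proof.
move=> Y21; rewrite -(ointB 0 v2_int Y21) mulrBr -!Y_def.
by rewrite opprD addrACA.
Qed.

Lemma implicit_lipschitz b1 b2 : `|Y b1 - Y b2| <= `|c| * `|b1 - b2|.
Proof.
apply: (@lipschitz_of_ordered_increments _ Y) => {}b1 {}b2 Y21.
rewrite -implicit_increment // ger0_norm ?subr_ge0 // lerDl.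
by apply: Rintegral_ge0 => x _; exact: sqr_ge0.
Qed.

Lemma primitive_implicit_lipschitz b1 b2 :
  `|F (Y b1) - F (Y b2)| <= `|c| * `|b1 - b2|.
Proof.
apply: (@lipschitz_of_ordered_increments _ Y (F \o Y)) => {}b1 {}b2 Y21 /=.
rewrite (F_prim (Y b1)) (F_prim (Y b2)) opprD addrACA subrr add0r.
rewrite (ointB 0 v_int Y21) -implicit_increment //.
apply: le_trans (le_normr_Rintegral _ (v_int _ _)) _ => //.
have -> : Y b1 - Y b2 = \int[mu]_(x in `[Y b2, Y b1]) cst 1 x.
  rewrite Rintegral_cst // mul1r.
  have /= -> := lebesgue_measure_itv `[Y b2, Y b1]; rewrite lte_fin.
  by case: ltgtP Y21 => // ->; rewrite subrr.
rewrite -RintegralD //; apply: le_Rintegral => //.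
- exact: integrable_norm.
- exact: (integrableD _ (one_int _ _) (v2_int _ _)).
- by move=> x _; exact: normr_le1Dsqr.
Qed.

End implicit_lipschitz.

Theorem lemma5p4 (R : realType) (u0 u0x : R -> R) (u ux : R -> R -> R)
  (y : R -> R -> R) :
  H1S u0 u0x ->
  intCirc (fun x => (u0x x) ^+ 2) != 1 ->
  weak_solution u0 u0x u ux ->
  (forall t beta, 0 <= t ->
     y t beta + oint 0 (y t beta) (fun z => (ux t z) ^+ 2)
     = (1 + intCirc (fun x => (u0x x) ^+ 2)) * beta) ->
  forall t, 0 <= t ->
    (forall b1 b2, `|y t b1 - y t b2|
                   <= (1 + intCirc (fun x => (u0x x) ^+ 2)) * `|b1 - b2|) /\
    (forall b1 b2, `|u t (y t b1) - u t (y t b2)|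
                   <= (1 + intCirc (fun x => (u0x x) ^+ 2)) * `|b1 - b2|).
Proof.
move=> _ _ [u_H1 _] y_def t t0.
have [_ pux mux ux2_01 u_prim] := u_H1 t t0.
have ux2_int a b : (@lebesgue_measure R).-integrable `[a, b]
    (EFin \o (fun x => ux t x ^+ 2)).
  apply: periodic1_integrable_itv => //; first by move=> x; rewrite pux.
  exact: measurable_funX.
have h_ge0 : 0 <= intCirc (fun x => (u0x x) ^+ 2).
  by apply: Rintegral_ge0 => x _; exact: sqr_ge0.
rewrite -[1 + _]ger0_norm ?addr_ge0 //.
split=> b1 b2.
- exact: (implicit_lipschitz _ _ _ ux2_int (y_def t ^~ t0)).
- exact: (primitive_implicit_lipschitz _ _ _ _ mux ux2_int u_prim (y_def t ^~ t0)).
Qed.
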